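(* For every $d\in\mathbb N$ and every subset $A\subseteq\mathbb R^d$, one has $\operatorname{ch}A=\operatorname{conv}A$; equivalently, every convex subset of $\mathbb R^d$ is a Choquet set.
   Context: Let $V$ be a Banach space (here $V=\mathbb R^d$) with Borel $\sigma$-algebra $\mathcal B(V)$ and dual $V^*$. A Borel probability measure $\mu$ on $V$ has a barycenter if there is $y\in V$ with $L(y)=\int_V L(x)\,\mu(dx)$ for all $L\in V^*$; this $y$ is unique and is denoted $r(\mu)=\int_V x\,\mu(dx)$. For a Borel set $A\subseteq V$, $\mathcal M(A)$ is the set of regular Borel probability measures $\mu$ on $V$ with $\mu(A)=1$ that have a barycenter; for an arbitrary $A\subseteq V$, $\mathcal M(A)=\bigcup\{\mathcal M(B): B\subseteq A,\ B\in\mathcal B(V)\}$. A point $r(\mu)$ with $\mu\in\mathcal M(A)$ is a Choquet combination of points of $A$. $A$ is a Choquet set if $r(\mu)\in A$ for every $\mu\in\mathcal M(A)$. The Choquet hull $\operatorname{ch}A$ is the intersection of all Choquet sets containing $A$ (the smallest Choquet set containing $A$). *)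

From HB Require Import structures.
From mathcomp Require Import all_boot all_order all_algebra.
From mathcomp Require Import all_classical all_reals all_analysis.
Set Implicit Arguments. Unset Strict Implicit. Unset Printing Implicit Defensive.
Import Order.TTheory GRing.Theory Num.Theory.
Import numFieldNormedType.Exports.
Local Open Scope classical_set_scope.
Local Open Scope ring_scope.

Section Choquet.
Variables (R : realType) (d : nat).

Local Notation V := 'rV[R]_d.

Definition borelV : Type := g_sigma_algebraType (@open V).

Definition dual_elt (L : V -> R) : Prop :=
  (forall (a : R) (x y : V), L (a *: x + y) = a * L x + L y) /\ continuous L.

Definition is_barycenter (mu : probability borelV R) (y : V) : Prop :=
  forall L : V -> R, dual_elt L ->
    mu.-integrable setT (fun x : borelV => (L x)%:E) /\
    (\int[mu]_x (L x)%:E = (L y)%:E)%E.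

Definition has_barycenter (mu : probability borelV R) : Prop :=
  exists y, is_barycenter mu y.

Definition regular_measure (mu : probability borelV R) : Prop :=
  forall B : set borelV, measurable B ->
    mu B = ereal_sup [set mu K | K in [set K : set V | compact K /\ K `<=` B]] /\
    mu B = ereal_inf [set mu U | U in [set U : set V | open U /\ B `<=` U]].

(* mu \in M(A), for an arbitrary A : union over Borel B \subseteq A of M(B) *)
Definition in_M (A : set V) (mu : probability borelV R) : Prop :=
  exists B : set borelV, [/\ measurable B, B `<=` A & mu B = 1%E]
  /\ regular_measure mu /\ has_barycenter mu.

Definition choquet_set (A : set V) : Prop :=
  forall (mu : probability borelV R) (y : V),
    in_M A mu -> is_barycenter mu y -> A y.

Definition choquet_hull (A : set V) : set V :=
  [set x | forall C : set V, choquet_set C -> A `<=` C -> C x].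

Definition convex (C : set V) : Prop :=
  forall (x y : V) (t : R), C x -> C y -> 0 <= t <= 1 ->
    C (t *: x + (1 - t) *: y).

Definition conv_hull (A : set V) : set V :=
  [set x | forall C : set V, convex C -> A `<=` C -> C x].

End Choquet.

From HB Require Import structures.
From mathcomp Require Import all_boot all_order all_algebra.
From mathcomp Require Import all_classical all_reals all_analysis.
From mathcomp Require Import zify ring lra.
Set Implicit Arguments. Unset Strict Implicit. Unset Printing Implicit Defensive.
Import Order.TTheory GRing.Theory Num.Theory.
Import numFieldNormedType.Exports.
Import measurable_realfun.
Local Open Scope classical_set_scope.
Local Open Scope ring_scope.

(* If a probability measure carried by a convex set [C] has its barycenter [y]
   outside [C], a linear functional [l] separates [y] from [C] weakly but not
   trivially: [l >= l y] on [C], with strict inequality somewhere. As the mean of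
   [l] is [l y], the measure is carried by the convex slice [C `&` [l = l y]],
   which spans an affine subspace of smaller dimension; induction on that
   dimension gives [C y]. Conversely, two-point measures show that Choquet sets
   are convex. *)

Section DotProduct.
Variables (R : realType) (n : nat).
Implicit Types (l m x z : 'rV[R]_n) (a : R).

Definition dotv l x : R := \sum_i l 0 i * x 0 i.

Lemma dotvDr l x z : dotv l (x + z) = dotv l x + dotv l z.
Proof. by rewrite /dotv -big_split; apply: eq_bigr => i _; rewrite mxE mulrDr. Qed.

Lemma dotvZr l x a : dotv l (a *: x) = a * dotv l x.
Proof. by rewrite /dotv mulr_sumr; apply: eq_bigr => i _; rewrite mxE mulrCA. Qed.

Lemma dotvBr l x z : dotv l (x - z) = dotv l x - dotv l z.
Proof. by rewrite dotvDr -scaleN1r dotvZr mulN1r. Qed.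

Lemma dotvDl l m x : dotv (l + m) x = dotv l x + dotv m x.
Proof. by rewrite /dotv -big_split; apply: eq_bigr => i _; rewrite mxE mulrDl. Qed.

Lemma dotvZl l x a : dotv (a *: l) x = a * dotv l x.
Proof. by rewrite /dotv mulr_sumr; apply: eq_bigr => i _; rewrite mxE mulrA. Qed.

Lemma dotvNl l x : dotv (- l) x = - dotv l x.
Proof. by rewrite -scaleN1r dotvZl mulN1r. Qed.

Lemma dotv0l x : dotv 0 x = 0.
Proof. by rewrite -(scale0r 0) dotvZl mul0r. Qed.

Lemma dotv_delta (j : 'I_n) x : dotv (delta_mx 0 j) x = x 0 j.
Proof.
rewrite /dotv (bigD1 j) //= big1 ?addr0 => [|i /negbTE ij]; rewrite mxE.
  by rewrite !eqxx mul1r.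
by rewrite ij andbF mul0r.
Qed.

Lemma continuous_dotv l : continuous (dotv l).
Proof.
rewrite [dotv l](_ : _ = \sum_i (fun x => l 0 i * x 0 i)); last by rewrite fct_sumE.
apply: (big_ind (fun f : 'rV[R]_n -> R => continuous f)) => [x|f g cf cg x|i _ x].
- by rewrite -/(cst 0); exact: cst_continuous.
- exact: continuousD (cf x) (cg x).
- exact: continuousM (@cst_continuous _ _ (l 0 i) x) (@coord_continuous _ _ _ 0 i x).
Qed.

End DotProduct.

Section ConeSeparation.
Variables (R : realType) (n : nat).
Implicit Types (K : set 'rV[R]_n) (e l u v w : 'rV[R]_n).

Definition blunt_cone K :=
  [/\ forall u v, K u -> K v -> K (u + v),
      forall t u, 0 < t -> K u -> K (t *: u) & ~ K 0].

Definition separates_from0 l K :=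
  (forall u, K u -> 0 <= dotv l u) /\ exists2 k, K k & 0 < dotv l k.

Lemma blunt_cone_slice K e :
  blunt_cone K -> blunt_cone (K `&` [set u | dotv e u = 0]).
Proof.
case=> KD KZ K0; split; last by case.
- by move=> u v [Ku eu] [Kv ev]; split; [exact: KD | rewrite /= dotvDr eu ev addr0].
- by move=> t u t0 [Ku eu]; split; [exact: KZ | rewrite /= dotvZr eu mulr0].
Qed.

(* One-dimensional Hahn-Banach step: a positive combination of any [u'] with
   [e u' > 0] and any [v'] with [e v' < 0] lies in the slice [e = 0], so every
   [- l u' / e u'] is bounded by every [l v' / - e v']; the supremum of the former
   is a suitable coefficient. *)
Lemma blunt_cone_extend K e l u v : blunt_cone K ->
  (forall w, K w -> dotv e w = 0 -> 0 <= dotv l w) ->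
  K u -> 0 < dotv e u -> K v -> dotv e v < 0 ->
  exists a, forall w, K w -> 0 <= dotv (l + a *: e) w.
Proof.
case=> KD KZ _ lK Ku eu Kv ev.
have bound u' v' : K u' -> 0 < dotv e u' -> K v' -> dotv e v' < 0 ->
    - (dotv l u' / dotv e u') <= dotv l v' / - dotv e v'.
  move=> Ku' eu' Kv' ev'.
  have : 0 <= dotv l ((dotv e u')^-1 *: u' + (- dotv e v')^-1 *: v').
    apply: lK; first by apply: KD; apply: KZ; rewrite // invr_gt0 ?oppr_gt0.
    by rewrite dotvDr !dotvZr mulVf ?gt_eqF // invrN mulNr mulVf ?lt_eqF // subrr.
  rewrite dotvDr !dotvZr => h; rewrite -subr_ge0 opprK addrC.
  by rewrite [_ / _]mulrC [X in _ + X]mulrC.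
pose S := [set - (dotv l u' / dotv e u') | u' in [set u' | K u' /\ 0 < dotv e u']].
have supS : has_sup S.
  split; first by exists (- (dotv l u / dotv e u)), u.
  by exists (dotv l v / - dotv e v) => _ [u' [Ku' eu'] <-]; exact: bound.
exists (sup S) => w Kw; rewrite dotvDl dotvZl.
have [ew|ew|ew] := ltgtP (dotv e w) 0.
- have : sup S <= dotv l w / - dotv e w.
    by apply: ge_sup => [|_ [u' [Ku' eu'] <-]]; [case: supS | exact: bound].
  by rewrite ler_pdivlMr ?oppr_gt0 // => ?; lra.
- have : - (dotv l w / dotv e w) <= sup S by apply: sup_upper_bound => //; exists w.
  by rewrite -mulNr ler_pdivrMr // => ?; lra.
- by rewrite ew mulr0 addr0; apply: lK.
Qed.

Lemma blunt_cone_separation_coord K (j : nat) k : blunt_cone K ->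
  (forall u, K u -> forall i : 'I_n, (j <= i)%N -> u 0 i = 0) -> K k ->
  exists l, separates_from0 l K.
Proof.
elim: j => [|j IH] in K k *; move=> Kc Ksupp Kk.
  have k0 : k = 0 by apply/matrixP => a b; rewrite (ord1 a) mxE; exact: Ksupp.
  by case: Kc => _ _ []; rewrite -k0.
have [jn|nj] := ltnP j n; last first.
  by apply: (IH K k) => // u Ku i ji; move: (ltn_ord i); lia.
pose e : 'rV[R]_n := delta_mx 0 (Ordinal jn).
have eE u : dotv e u = u 0 (Ordinal jn) by rewrite dotv_delta.
pose K' := K `&` [set u | dotv e u = 0].
have IH' k' : K' k' -> exists l, separates_from0 l K'.
  move=> K'k'; apply: IH K'k'; first exact: blunt_cone_slice.
  move=> u [Ku eu] i ji; have [ij|nij] := eqVneq (nat_of_ord i) j.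
    by rewrite -eu eE; congr (u 0 _); apply: val_inj.
  by apply: Ksupp => //; move/eqP: nij; lia.
have [[u [Ku eu]]|upos] := pselect (exists u, K u /\ 0 < dotv e u);
have [[v [Kv ev]]|vneg] := pselect (exists v, K v /\ dotv e v < 0).
- have [KD KZ _] := Kc.
  have K'w : K' (dotv e u *: v + (- dotv e v) *: u).
    split; first by apply: KD; apply: KZ; rewrite // oppr_gt0.
    by rewrite /= dotvDr !dotvZr; ring.
  have [l [lK' [k' [Kk' ek'] lk']]] := IH' _ K'w.
  have [a laK] := blunt_cone_extend Kc (fun w Kw ew => lK' w (conj Kw ew)) Ku eu Kv ev.
  exists (l + a *: e); split => //; exists k' => //.
  by rewrite dotvDl dotvZl ek' mulr0 addr0.
- exists e; split => [w Kw|]; last by exists u.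
  by rewrite leNgt; apply/negP => ew; apply: vneg; exists w.
- exists (- e); split => [w Kw|]; last by exists v; rewrite // dotvNl oppr_gt0.
  by rewrite dotvNl oppr_ge0 leNgt; apply/negP => ew; apply: upos; exists w.
- have KK' w : K w -> K' w.
    move=> Kw; split => //; apply/eqP; rewrite eq_le !leNgt.
    by apply/andP; split; apply/negP => ew; [apply: upos | apply: vneg]; exists w.
  have [l [lK' [k' [Kk' _] lk']]] := IH' _ (KK' _ Kk).
  by exists l; split => [w /KK'|]; [exact: lK' | exists k'].
Qed.

Lemma blunt_cone_separation K k : blunt_cone K -> K k -> exists l, separates_from0 l K.
Proof.
move=> Kc; apply: (@blunt_cone_separation_coord K n k) => // u _ i ni.
by move: (ltn_ord i); lia.
Qed.

End ConeSeparation.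

Section MeanAtLowerBound.
Context d (T : measurableType d) (R : realType) (mu : probability T R).
Local Open Scope ereal_scope.

Lemma measurable_level (L : T -> R) c :
  measurable_fun setT L -> measurable [set x | L x = c].
Proof. by move=> mL; have := mL measurableT _ (measurable_set1 c); rewrite setTI. Qed.

Lemma integral_on_full_set (B : set T) (f : T -> \bar R) :
  measurable B -> mu B = 1 -> mu.-integrable setT f ->
  \int[mu]_(x in B) f x = \int[mu]_x f x.
Proof.
move=> mB muB intf; have muBc : mu (~` B) = 0 by rewrite probability_setC // muB subee.
by rewrite (negligible_integral (measurableC mB) measurableT intf muBc) setTD setCK.
Qed.

Lemma nonneg_integral0_negligible (B : set T) (f : T -> R) :
  measurable B -> measurable_fun B f -> (forall x, B x -> (0 <= f x)%R) ->
  \int[mu]_(x in B) (f x)%:E = 0 -> mu (B `&` [set x | f x != 0%R]) = 0.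
Proof.
move=> mB mf f0 intf0.
have mEf : measurable_fun B (fun x => (f x)%:E) by apply/measurable_EFinP.
have : \int[mu]_(x in B) `|(f x)%:E| = 0.
  by rewrite -intf0; apply: eq_integral => x /[!inE] Bx; rewrite gee0_abs ?lee_fin ?f0.
case/(ae_eq_integral_abs mu mB mEf) => N [mN muN sN].
apply: (subset_measure0 _ mN _ muN).
  rewrite [X in measurable X](_ : _ = B `&` f @^-1` [set~ 0%R]).
    exact: mf mB _ (measurableC (measurable_set1 _)).
  by apply/seteqP; split => x [Bx /eqP fx].
by move=> x [Bx /eqP fx]; apply: sN => /(_ Bx) [].
Qed.

Lemma mean_at_lower_bound (B : set T) (L : T -> R) c :
  measurable B -> mu B = 1 -> mu.-integrable setT (EFin \o L) ->
  \int[mu]_x (L x)%:E = c%:E -> (forall x, B x -> (c <= L x)%R) ->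
  mu (B `&` [set x | L x = c]) = 1.
Proof.
move=> mB muB intL meanL BL.
have mL : measurable_fun setT L by apply/measurable_EFinP; case/integrableP: intL.
have mLc := measurable_level c mL.
have intBL := integrableS measurableT mB (@subsetT _ _) intL.
have : \int[mu]_(x in B) ((L x - c)%R)%:E = 0.
  under eq_integral do rewrite EFinB.
  rewrite integralB_EFin // ?finite_measure_integrable_cst //.
  rewrite integral_on_full_set // meanL integral_cst //.
  by rewrite [X in _ * X](_ : _ = 1) ?mule1 ?subee //; exact: muB.
move/nonneg_integral0_negligible => /(_ mB) muBLc.
rewrite -muB (measureDI mu mB mLc) [X in X + _](_ : _ = 0) ?add0e //.
rewrite (_ : _ `\` _ = B `&` [set x | (L x - c)%R != 0%R]).
  apply: muBLc => [|x Bx]; last by rewrite subr_ge0 BL.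
  exact/measurable_funB/measurable_cst/(measurable_funS measurableT).
by apply/seteqP; split => x [Bx]; rewrite /= subr_eq0 => /eqP.
Qed.

End MeanAtLowerBound.

Section ConvexSupport.
Variables (R : realType) (n : nat).
Implicit Types (C : set 'rV[R]_n) (l x y z : 'rV[R]_n).

Definition cone_from C y :=
  [set u | exists t x, [/\ 0 < t, C x & u = t *: (x - y)]].

Lemma blunt_cone_from C y : convex C -> ~ C y -> blunt_cone (cone_from C y).
Proof.
move=> Cc nCy; split.
- move=> _ _ [t [x [t0 Cx ->]]] [s [z [s0 Cz ->]]].
  have ts0 : 0 < t + s by rewrite addr_gt0.
  exists (t + s), ((t / (t + s)) *: x + (1 - t / (t + s)) *: z); split => //.
    apply: Cc => //; apply/andP; split; first by rewrite divr_ge0 // ltW.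
    by rewrite ler_pdivrMr // mul1r lerDl ltW.
  by apply/matrixP => a c; rewrite !mxE; field; rewrite lt0r_neq0.
- move=> t _ t0 [s [x [s0 Cx ->]]]; exists (t * s), x.
  by rewrite mulr_gt0 // scalerA.
- move=> [t [x [t0 Cx /esym/eqP]]]; rewrite scaler_eq0 (gt_eqF t0) subr_eq0.
  by move=> /eqP xy; apply: nCy; rewrite -xy.
Qed.

Lemma convex_support C y b : convex C -> ~ C y -> C b ->
  exists l, (forall z, C z -> dotv l y <= dotv l z) /\ exists2 x, C x & dotv l y < dotv l x.
Proof.
move=> Cc nCy Cb; have Kc := blunt_cone_from Cc nCy.
have Kshift z : C z -> cone_from C y (z - y) by exists 1, z; rewrite scale1r.
have [l [lK [_ [t [x [t0 Cx ->]]] lx]]] := blunt_cone_separation Kc (Kshift _ Cb).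
exists l; split => [z /Kshift /lK|]; first by rewrite dotvBr subr_ge0.
by exists x => //; move: lx; rewrite dotvZr pmulr_rgt0 // dotvBr subr_gt0.
Qed.

Lemma convex_slice C l c : convex C -> convex (C `&` [set z | dotv l z = c]).
Proof.
move=> Cc x z t [Cx lx] [Cz lz] t01; split; first exact: Cc.
by rewrite /= dotvDr !dotvZr lx lz; ring.
Qed.

End ConvexSupport.

Section ConvexChoquet.
Variables (R : realType) (d : nat).
Local Notation V := 'rV[R]_d.

Lemma dual_elt_dotv (l : V) : dual_elt (dotv l).
Proof. by split; [move=> a x z; rewrite dotvDr dotvZr | exact: continuous_dotv]. Qed.

Lemma continuous_measurable_borelV (L : V -> R) : continuous L ->
  measurable_fun [set: borelV R d] (L : borelV R d -> R).
Proof.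
move=> /continuousP cL; apply: (measurability _ (RGenOpens.measurableE R)).
move=> _ [_ [a [b ->] <-]]; rewrite setTI; apply: sub_sigma_algebra.
exact/cL/interval_open.
Qed.

Variables (mu : probability (borelV R d) R) (y : V).
Hypothesis mu_y : is_barycenter mu y.

Lemma barycenter_hyperplane (B : set (borelV R d)) (l : V) :
  measurable B -> mu B = 1%E -> (forall x, B x -> dotv l y <= dotv l x) ->
  measurable (B `&` [set x | dotv l x = dotv l y]) /\
  mu (B `&` [set x | dotv l x = dotv l y]) = 1%E.
Proof.
move=> mB muB lB; have [intl meanl] := mu_y (dual_elt_dotv l).
split; last exact: mean_at_lower_bound.
apply: measurableI => //; apply: measurable_level.
exact: continuous_measurable_borelV (@continuous_dotv _ _ l).
Qed.

(* A supporting functional [l] at [y] is not orthogonal to [C - y], so adding it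
   to [M] raises the rank. *)
Lemma convex_barycenter_rank k (M : 'M[R]_d) (C : set V) (B : set (borelV R d)) :
  (d - \rank M < k)%N -> convex C -> measurable B -> B `<=` C -> mu B = 1%E ->
  (forall x v, C x -> (v <= M)%MS -> dotv v (x - y) = 0) -> C y.
Proof.
elim: k => // k IH in M C B *; move=> rkM Cc mB BC muB MC.
have [//|nCy] := pselect (C y).
have [b Bb] : B !=set0.
  apply/set0P/negP => /eqP B0; move: muB; rewrite B0 measure0 => /esym/eqP.
  by rewrite onee_eq0.
have [l [ly [x Cx lx]]] := convex_support Cc nCy (BC b Bb).
have lM : ~~ (l <= M)%MS.
  by apply: contraL lx => /(MC x l Cx)/eqP; rewrite dotvBr subr_eq0 => /eqP ->; rewrite ltxx.
have rkMl : (\rank M < \rank (M + l)%MS)%N.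
  by apply: rank_ltmx; rewrite ltmxE addsmxSl /=; apply: contra lM; apply: submx_trans (addsmxSr M l).
have [mBl muBl] := barycenter_hyperplane mB muB (fun z Bz => ly z (BC z Bz)).
suff [] : (C `&` [set z | dotv l z = dotv l y]) y by [].
apply: (IH (M + l)%MS _ _ _ (convex_slice (l:=l) (c:=dotv l y) Cc) mBl _ muBl).
- by move: (rank_leq_col (M + l)%MS); lia.
- by move=> z [Bz lz]; split; first exact: BC.
- move=> z v [Cz lz] /sub_addsmxP [[u1 u2] /= ->].
  rewrite dotvDl (MC z (u1 *m M) Cz (submxMl _ _)) add0r.
  by rewrite (mx11_scalar u2) mul_scalar_mx dotvZl dotvBr lz subrr mulr0.
Qed.

Lemma convex_in_M_barycenter (C : set V) : convex C -> in_M C mu -> C y.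
Proof.
move=> Cc [B [[mB BC muB] _]]; apply: (@convex_barycenter_rank d.+1 0 C B) => //.
  by rewrite mxrank0 subn0.
by move=> x v _; rewrite submx0 => /eqP ->; rewrite dotv0l.
Qed.

End ConvexChoquet.

Lemma convex_choquet_set (R : realType) (d : nat) (C : set 'rV[R]_d) :
  convex C -> choquet_set C.
Proof. by move=> Cc mu y CM mu_y; exact: (convex_in_M_barycenter mu_y Cc CM). Qed.

Lemma dual_elt_combination (R : realType) (d : nat) (L : 'rV[R]_d -> R) x z t :
  dual_elt L -> L (t *: x + (1 - t) *: z) = t * L x + (1 - t) * L z.
Proof.
case=> Llin _; have L0 : L 0 = 0.
  have := Llin 1 0 0; rewrite scale1r addr0 mul1r => /eqP.
  by rewrite -{1}[L 0]addr0 (inj_eq (addrI _)) eq_sym => /eqP.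
have LZ a w : L (a *: w) = a * L w by rewrite -[a *: w]addr0 Llin L0 addr0.
by rewrite Llin LZ.
Qed.

Lemma subset_mem_le (T : Type) (R : numDomainType) (a : T) (A B : set T) :
  A `<=` B -> ((a \in A)%:R <= (a \in B)%:R :> R).
Proof.
move=> AB; have [aA|//] := boolP (a \in A).
by rewrite (mem_set (AB _ (set_mem aA))).
Qed.

Section TwoPointMeasure.
Variables (R : realType) (d : nat).
Local Notation T := (borelV R d).
Variables (x z : T) (t : R) (t0 : 0 <= t) (t1 : 0 <= 1 - t).

Definition two_point : set T -> \bar R :=
  measure_add (mscale (NngNum t0) \d_x) (mscale (NngNum t1) \d_z).

HB.instance Definition _ := Measure.on two_point.

Let two_point_mem A : two_point A = (t * (x \in A)%:R + (1 - t) * (z \in A)%:R)%:E.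
Proof.
rewrite /two_point measure_addE.
transitivity (t%:E * \d_x A + (1 - t)%:E * \d_z A)%E; first by [].
by rewrite !diracE -!EFinM -EFinD.
Qed.

Let two_point_setT : two_point setT = 1%E.
Proof. by rewrite two_point_mem !in_setT /= !mulr1 subrKC. Qed.

HB.instance Definition _ := Measure_isProbability.Build _ _ _ two_point two_point_setT.

Lemma two_pointE A :
  (two_point : probability T R) A = (t * (x \in A)%:R + (1 - t) * (z \in A)%:R)%:E.
Proof. exact: two_point_mem. Qed.

Lemma two_point_integral_ge0 (g : T -> R) : measurable_fun setT g -> (forall w, 0 <= g w) ->
  (\int[two_point]_w (g w)%:E = (t * g x + (1 - t) * g z)%:E)%E.
Proof.
move=> mg g0; have mEg : measurable_fun setT (fun w => (g w)%:E) by apply/measurable_EFinP.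
rewrite ge0_integral_measure_add //; last by move=> w _; rewrite lee_fin.
rewrite !ge0_integral_mscale //; try by move=> w _; rewrite lee_fin.
by rewrite !integral_dirac // !diracE !in_setT /= !mul1e -!EFinM -EFinD.
Qed.

Lemma two_point_barycenter : is_barycenter two_point (t *: (x : 'rV[R]_d) + (1 - t) *: z).
Proof.
move=> L Ldual; have mL := continuous_measurable_borelV Ldual.2.
split.
  apply/integrableP; split; first exact/measurable_EFinP.
  under eq_integral => w _ do rewrite abse_EFin.
  rewrite two_point_integral_ge0 ?ltry //.
  exact: measurableT_comp (@normr_measurable _ _) mL.
rewrite integralE (_ : (fun w => (L w)%:E) = EFin \o L) // funerpos funerneg.
rewrite (two_point_integral_ge0 (measurable_funrpos mL) (funrpos_ge0 L)).
rewrite (two_point_integral_ge0 (measurable_funrneg mL) (funrneg_ge0 L)).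
rewrite -EFinB dual_elt_combination //; congr EFin.
have LE w : L w = L^\+ w - L^\- w by rewrite -[in LHS](funrposBneg L).
by rewrite (LE x) (LE z); ring.
Qed.

Lemma two_point_le A B : A `<=` B -> (two_point A <= two_point B)%E.
Proof.
by move=> AB; rewrite !two_pointE lee_fin lerD // ler_wpM2l // subset_mem_le.
Qed.

Lemma two_point_regular : regular_measure two_point.
Proof.
have finxz : finite_set [set (x : 'rV[R]_d); z] := finite_set2 x z.
move=> B mB; split; apply/eqP; rewrite eq_le; apply/andP; split.
- apply: ereal_sup_ubound; exists (B `&` [set x; z]).
    by split; [exact: finite_compact (sub_finite_set (@subIsetr _ _ _) finxz) | exact: subIsetl].
  by rewrite !two_pointE !in_setI !in_setU !in_set1 !eqxx orbT !andbT.
- by apply: ge_ereal_sup => _ [K [_ KB] <-]; exact: two_point_le.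
- by apply/ereal_infP => _ [U [_ BU] <-]; exact: two_point_le.
- pose U : set 'rV[R]_d := ~` (~` B `&` [set x; z]).
  have oU : open U.
    apply: closed_openC; apply: compact_closed; first exact: norm_hausdorff.
    exact: finite_compact (sub_finite_set (@subIsetr _ _ _) finxz).
  apply: ge_ereal_inf; exists ((two_point : probability T R) U).
    by exists U => //; split => // w Bw [].
  rewrite !two_pointE !in_setC !in_setI !in_setC !in_setU !in_set1 !eqxx orbT.
  by rewrite !andbT !negbK.
Qed.

End TwoPointMeasure.

Lemma choquet_set_convex (R : realType) (d : nat) (C : set 'rV[R]_d) :
  choquet_set C -> convex C.
Proof.
move=> Cch a b s Ca Cb /andP[s0 s1]; have s1' : 0 <= 1 - s by rewrite subr_ge0.
apply: (Cch (two_point (a : borelV R d) b s0 s1')); last exact: two_point_barycenter.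
exists [set (a : borelV R d); b]; split; last first.
  by split; [exact: two_point_regular | eexists; exact: two_point_barycenter].
split.
- rewrite -[X in measurable X]setCK; apply: measurableC; apply: sub_sigma_algebra.
  apply: closed_openC; apply: compact_closed; first exact: norm_hausdorff.
  exact: finite_compact (finite_set2 _ _).
- by move=> w [->|->].
- by rewrite two_pointE !in_setU !in_set1 !eqxx orbT /= !mulr1 subrKC.
Qed.

Theorem mainTheorem3 (R : realType) (d : nat) :
  (forall A : set 'rV[R]_d, choquet_hull A = conv_hull A) /\
  (forall C : set 'rV[R]_d, convex C -> choquet_set C).
Proof.
split; last exact: convex_choquet_set.
move=> A; apply/seteqP; split => w Aw C.
- by move=> Cc AC; apply: Aw => //; exact: convex_choquet_set.
- by move=> Cch AC; apply: Aw => //; exact: choquet_set_convex.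
Qed.
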